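(* Let $\mathcal{I}$ be an $\mathcal{R}$-monoid, let $\mathcal{S} \subseteq \mathcal{P}(\mathbb{N})$ be closed under subsets, and let $\mathcal{L}$ be a class of languages. The following are equivalent: (1) there is a learner $h\in\mathcal I$ that $\mathbf{Txt}\mathbf{G}\mathbf{Caut}_{\mathbf{Tar}}\mathbf{Ex}$-learns every $L\in\mathcal L$ and that is defined on every text $T\in\mathbf{Txt}(\mathcal S)$ (i.e. $\mathbf G(h,T)$ is total); (2) there is a learner $h\in\mathcal I$ that $\mathbf{Txt}\mathbf{Psd}\mathbf{Caut}_{\mathbf{Tar}}\mathbf{Ex}$-learns every $L\in\mathcal L$ and that is defined on every text $T\in\mathbf{Txt}(\mathcal S)$ (i.e. $\mathbf{Psd}(h,T)$ is total).
   Context: Fix an acceptable numbering $(\varphi_e)$ of partial computable functions, $W_e=\mathrm{dom}(\varphi_e)$. A text is a total function $T:\mathbb N\to\mathbb N\cup\{\#\}$, $\mathrm{content}(T)=\mathrm{range}(T)\setminus\{\#\}$, $T[n]=(T(0),\dots,T(n-1))$; $\mathbf{Txt}(L)$ is the set of texts with content $L$, and for $\mathcal S$ closed under subsets $\mathbf{Txt}(\mathcal S)=\bigcup_{S\in\mathcal S}\mathbf{Txt}(S)$. Learners are partial computable functions; $\mathbf G(h,T)(i)=h(T[i])$ and $\mathbf{Psd}(h,T)(i)=h(\mathrm{content}(T[i]),i)$. For total $p:\mathbb N\to\mathbb N$ and a text $T$: $\mathbf{Ex}(p,T)$ iff $\exists n_0\,\forall n\ge n_0: p(n)=p(n_0)\wedge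 W_{p(n_0)}=\mathrm{content}(T)$; $\mathbf{Caut}_{\mathbf{Tar}}(p,T)$ iff for no $n$ is $\mathrm{content}(T)\subsetneq W_{p(n)}$. $h$ $\mathbf{Txt}\beta\delta\mathbf{Ex}$-learns $L$ iff for every $T\in\mathbf{Txt}(L)$, $\beta(h,T)$ is total and $\delta(\beta(h,T),T)$ and $\mathbf{Ex}(\beta(h,T),T)$ hold. $\mathcal R$ is the set of total computable functions; $\mathcal I\subseteq$ (partial computable functions) is an $\mathcal R$-monoid iff $(\mathcal I,\circ)$ is a monoid and $\mathcal R\subseteq\mathcal I$. *)

From Stdlib Require Import Arith List.
Import ListNotations.

Inductive prf : Type :=
| PZero : prf
| PSucc : prf
| PProj : nat -> prf
| PComp : prf -> list prf -> prf
| PRec  : prf -> prf -> prf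
| PMu   : prf -> prf.

Inductive evalp : prf -> list nat -> nat -> Prop :=
| ev_zero xs : evalp PZero xs 0
| ev_succ xs : evalp PSucc xs (S (hd 0 xs))
| ev_proj i xs : evalp (PProj i) xs (nth i xs 0)
| ev_comp f gs xs ys y :
    Forall2 (fun g z => evalp g xs z) gs ys -> evalp f ys y ->
    evalp (PComp f gs) xs y
| ev_rec0 f g xs y : evalp f xs y -> evalp (PRec f g) (0 :: xs) y
| ev_recS f g n xs r y :
    evalp (PRec f g) (n :: xs) r -> evalp g (n :: r :: xs) y ->
    evalp (PRec f g) (S n :: xs) y
| ev_mu f xs n :
    evalp f (n :: xs) 0 ->
    (forall m, m < n -> exists k, evalp f (m :: xs) (S k)) ->
    evalp (PMu f) xs n.

Definition pfun := nat -> option nat.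

Definition pcomp (f g : pfun) : pfun :=
  fun x => match g x with Some y => f y | None => None end.

Definition partial_computable (f : pfun) : Prop :=
  exists t, forall x y, f x = Some y <-> evalp t [x] y.

Definition total_pfun (f : pfun) : Prop := forall x, f x <> None.

Definition total_computable (f : pfun) : Prop :=
  partial_computable f /\ total_pfun f.

Definition computable_numbering (psi : nat -> pfun) : Prop :=
  exists t, forall e x y, psi e x = Some y <-> evalp t [e; x] y.

Definition acceptable (phi : nat -> pfun) : Prop :=
  computable_numbering phi /\
  forall psi, computable_numbering psi ->
    exists s : nat -> nat,
      (exists t, forall x, evalp t [x] (s x)) /\
      forall e x, phi (s e) x = psi e x.

Definition W (phi : nat -> pfun) (e : nat) : nat -> Prop :=
  fun x => phi e x <> None.

Definition R_monoid (I : pfun -> Prop) : Prop :=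
  (forall f, I f -> partial_computable f) /\
  I (fun x => Some x) /\
  (forall f g, I f -> I g -> I (pcomp f g)) /\
  (forall f, total_computable f -> I f).

(** A text: [None] stands for the pause symbol #. *)
Definition text := nat -> option nat.

Definition content (T : text) : nat -> Prop := fun x => exists n, T n = Some x.

Definition set_eq (A B : nat -> Prop) : Prop := forall x, A x <-> B x.

Definition closed_under_subsets (S : (nat -> Prop) -> Prop) : Prop :=
  forall A B, (forall x, B x -> A x) -> S A -> S B.

Definition TxtS (S : (nat -> Prop) -> Prop) (T : text) : Prop := S (content T).

Definition cpair (x y : nat) : nat := (x + y) * (x + y + 1) / 2 + y.

Definition code_elem (a : option nat) : nat :=
  match a with None => 0 | Some n => S n end.

Definition code_seq (s : list (option nat)) : nat :=
  fold_right (fun a c => S (cpair (code_elem a) c)) 0 s.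

Definition initseg (T : text) (i : nat) : list (option nat) := map T (seq 0 i).

(** Canonical index of the finite set content(T[i]): sum of 2^x. *)
Fixpoint somes (s : list (option nat)) : list nat :=
  match s with
  | [] => []
  | Some x :: s' => x :: somes s'
  | None :: s' => somes s'
  end.

Definition canon_content (T : text) (i : nat) : nat :=
  fold_right (fun x c => 2 ^ x + c) 0 (nodup Nat.eq_dec (somes (initseg T i))).

Definition Gbeta (h : pfun) (T : text) : nat -> option nat :=
  fun i => h (code_seq (initseg T i)).

Definition Psdbeta (h : pfun) (T : text) : nat -> option nat :=
  fun i => h (cpair (canon_content T i) i).

Definition Ex (phi : nat -> pfun) (p : nat -> nat) (T : text) : Prop :=
  exists n0, forall n, n0 <= n ->
    p n = p n0 /\ set_eq (W phi (p n0)) (content T).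

Definition CautTar (phi : nat -> pfun) (p : nat -> nat) (T : text) : Prop :=
  ~ exists n, (forall x, content T x -> W phi (p n) x) /\
              exists x, W phi (p n) x /\ ~ content T x.

Definition learns (phi : nat -> pfun) (beta : pfun -> text -> nat -> option nat)
    (h : pfun) (L : nat -> Prop) : Prop :=
  forall T : text, set_eq (content T) L ->
    exists p : nat -> nat,
      (forall n, beta h T n = Some (p n)) /\ CautTar phi p T /\ Ex phi p T.

Definition defined_on (beta : pfun -> text -> nat -> option nat) (h : pfun)
    (S : (nat -> Prop) -> Prop) : Prop :=
  forall T : text, TxtS S T -> forall n, beta h T n <> None.

From Stdlib Require Import Arith Bool List Lia Classical IndefiniteDescription Wf_nat.
Import ListNotations.

(* Psd to G: the G-learner [fun c => h (code_to_psd c)] recomputes the content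
   and the length of its input sequence, so it sees exactly what the Psd-learner
   [h] sees.

   G to Psd: let the term [th] compute the G-learner [h].  Given a finite set [D]
   and a time [t], the Psd-learner runs [h] on the least code [c <= t] that looks
   like a locking sequence for [D] when [h] is simulated for [t] steps.  Its
   hypotheses are hypotheses of [h] on sequences drawn from the content of the
   text, hence on texts for the same language, which transfers cautiousness.  By
   the Blum-Blum lemma a locking sequence exists; the least code of one is
   eventually accepted while every smaller code is eventually rejected, which
   transfers convergence.

   Both new learners are [h] composed with a total recursive function, so they
   stay in the R-monoid.  The only recursion theory needed is that step-bounded
   evaluation of terms is total recursive. *)

(** * Step-bounded evaluation *)

Fixpoint mu_search (F : nat -> option nat) (fuel m : nat) : option nat :=
  match fuel with
  | 0 => None
  | S fuel' => match F m with
               | Some 0 => Some m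
               | Some (S _) => mu_search F fuel' (S m)
               | None => None
               end
  end.

Fixpoint all_some (l : list (option nat)) : option (list nat) :=
  match l with
  | [] => Some []
  | Some z :: l' => option_map (cons z) (all_some l')
  | None :: _ => None
  end.

Fixpoint eval_fuel (k : nat) (t : prf) (xs : list nat) {struct t} : option nat :=
  match t with
  | PZero => Some 0
  | PSucc => Some (S (hd 0 xs))
  | PProj i => Some (nth i xs 0)
  | PComp f gs =>
      match all_some (map (fun g => eval_fuel k g xs) gs) with
      | Some ys => eval_fuel k f ys
      | None => None
      end
  | PRec f g =>
      match xs with
      | [] => None
      | n :: ys =>
          nat_rect (fun _ => option nat) (eval_fuel k f ys)
            (fun m r => match r with
                        | Some r' => eval_fuel k g (m :: r' :: ys)
                        | None => None
                        end) n
      end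
  | PMu f => mu_search (fun m => eval_fuel k f (m :: xs)) k 0
  end.

Lemma eval_fuel_PComp k f gs xs :
  eval_fuel k (PComp f gs) xs =
  match all_some (map (fun g => eval_fuel k g xs) gs) with
  | Some ys => eval_fuel k f ys
  | None => None
  end.
Proof. reflexivity. Qed.

Definition prf_nested_ind (P : prf -> Prop) (H0 : P PZero) (H1 : P PSucc)
  (H2 : forall i, P (PProj i))
  (H3 : forall f gs, P f -> Forall P gs -> P (PComp f gs))
  (H4 : forall f g, P f -> P g -> P (PRec f g))
  (H5 : forall f, P f -> P (PMu f)) : forall t, P t :=
  fix F t := match t return P t with
  | PZero => H0
  | PSucc => H1
  | PProj i => H2 i
  | PComp f gs => H3 f gs (F f)
      ((fix G gs := match gs return Forall P gs with
                    | [] => Forall_nil P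
                    | g :: gs' => @Forall_cons _ P g gs' (F g) (G gs')
                    end) gs)
  | PRec f g => H4 f g (F f) (F g)
  | PMu f => H5 f (F f)
  end.

Lemma all_some_map {A} (F : A -> option nat) l ys :
  all_some (map F l) = Some ys <-> Forall2 (fun a y => F a = Some y) l ys.
Proof.
  revert ys; induction l as [|a l IH]; intros ys; simpl.
  - split; [intros [= <-]; constructor | now inversion 1].
  - split.
    + destruct (F a) as [z|] eqn:Ea; [|discriminate].
      destruct (all_some (map F l)) as [zs|] eqn:E; [|discriminate].
      intros [= <-]. constructor; [exact Ea|]. now apply IH.
    + inversion 1 as [|? y ? ys' Ha Hl]; subst. rewrite Ha.
      apply IH in Hl. now rewrite Hl.
Qed.

Lemma mu_search_sound F fuel m n :
  mu_search F fuel m = Some n ->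
  m <= n /\ F n = Some 0 /\ forall j, m <= j < n -> exists z, F j = Some (S z).
Proof.
  revert m; induction fuel as [|fuel IH]; simpl; intros m H; [discriminate|].
  destruct (F m) as [[|z]|] eqn:E; try discriminate.
  - injection H as <-. repeat split; auto. lia.
  - destruct (IH _ H) as (Hmn & Hn & Hbelow). repeat split; auto; [lia|].
    intros j Hj. destruct (Nat.eq_dec j m) as [->|]; eauto. apply Hbelow; lia.
Qed.

Lemma mu_search_mono F F' fuel fuel' m n :
  mu_search F fuel m = Some n -> fuel <= fuel' ->
  (forall j y, F j = Some y -> F' j = Some y) -> mu_search F' fuel' m = Some n.
Proof.
  revert fuel' m; induction fuel as [|fuel IH]; simpl; intros fuel' m H Hle HF; [discriminate|].
  destruct fuel' as [|fuel']; [lia|]. simpl.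
  destruct (F m) as [[|z]|] eqn:E; try discriminate; rewrite (HF _ _ E); auto.
  apply IH; auto. lia.
Qed.

Lemma mu_search_complete F fuel m n :
  F n = Some 0 -> (forall j, m <= j < n -> exists z, F j = Some (S z)) ->
  m <= n < m + fuel -> mu_search F fuel m = Some n.
Proof.
  revert m; induction fuel as [|fuel IH]; simpl; intros m Hn Hbelow Hrange; [lia|].
  destruct (Nat.eq_dec m n) as [->|].
  - now rewrite Hn.
  - destruct (Hbelow m) as [z Hz]; [lia|]. rewrite Hz.
    apply IH; auto; [|lia]. intros; apply Hbelow; lia.
Qed.

Lemma mu_search_skip F d fuel m : d <= fuel ->
  (forall j, j < d -> exists z, F (m + j) = Some (S z)) ->
  mu_search F fuel m = mu_search F (fuel - d) (m + d).
Proof.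
  revert fuel m; induction d as [|d IH]; intros fuel m Hd H.
  - now rewrite Nat.sub_0_r, Nat.add_0_r.
  - destruct fuel as [|fuel]; [lia|]. simpl.
    destruct (H 0) as [z Hz]; [lia|]. rewrite Nat.add_0_r in Hz. rewrite Hz.
    rewrite IH by (try lia; intros j Hj; rewrite Nat.add_succ_comm; apply H; lia).
    now rewrite Nat.add_succ_comm.
Qed.

Lemma eval_fuel_sound : forall t k xs y, eval_fuel k t xs = Some y -> evalp t xs y.
Proof.
  induction t as [| |i|f gs IHf IHgs|f g IHf IHg|f IHf] using prf_nested_ind;
    intros k xs y Hev.
  - injection Hev as <-. constructor.
  - injection Hev as <-. constructor.
  - injection Hev as <-. constructor.
  - rewrite eval_fuel_PComp in Hev.
    destruct (all_some (map (fun g => eval_fuel k g xs) gs)) as [ys|] eqn:E; [|discriminate].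
    apply all_some_map in E.
    apply ev_comp with ys; [|eauto].
    clear Hev. induction E; constructor; inversion IHgs; subst; eauto.
  - simpl in Hev. destruct xs as [|n ys]; [discriminate|].
    revert y Hev. induction n as [|n IHn]; simpl; intros y Hev.
    + constructor; eauto.
    + destruct (nat_rect _ _ _ n) eqn:E; [|discriminate]. econstructor; eauto.
  - simpl in Hev. apply mu_search_sound in Hev as (_ & Hn & Hbelow).
    constructor; eauto.
    intros m Hm. destruct (Hbelow m) as [z Hz]; [lia|]. eauto.
Qed.

Lemma eval_fuel_mono : forall t k k' xs y,
  eval_fuel k t xs = Some y -> k <= k' -> eval_fuel k' t xs = Some y.
Proof.
  induction t as [| |i|f gs IHf IHgs|f g IHf IHg|f IHf] using prf_nested_ind;
    intros k k' xs y Hev Hk; try exact Hev.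
  - rewrite eval_fuel_PComp in *.
    destruct (all_some (map (fun g => eval_fuel k g xs) gs)) as [ys|] eqn:E; [|discriminate].
    apply all_some_map in E.
    replace (all_some (map (fun g => eval_fuel k' g xs) gs)) with (Some ys); [eauto|].
    symmetry. apply all_some_map.
    clear Hev. induction E; constructor; inversion IHgs; subst; eauto.
  - simpl in *. destruct xs as [|n ys]; [discriminate|].
    revert y Hev. induction n as [|n IHn]; simpl; intros y Hev; [eauto|].
    destruct (nat_rect (fun _ => option nat) (eval_fuel k f ys) _ n) eqn:E; [|discriminate].
    rewrite (IHn _ eq_refl). eauto.
  - simpl in *. eapply mu_search_mono; [exact Hev|exact Hk|].
    intros j z Hj. exact (IHf _ _ _ _ Hj Hk).
Qed.

Lemma eval_fuel_mu_complete f xs n :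
  (exists k, eval_fuel k f (n :: xs) = Some 0) ->
  (forall m, m < n -> exists k z, eval_fuel k f (m :: xs) = Some (S z)) ->
  exists k, eval_fuel k (PMu f) xs = Some n.
Proof.
  intros [k1 Hk1] Hbelow.
  assert (Hpre : forall n', n' <= n -> exists k, forall k', k <= k' ->
            forall j, j < n' -> exists z, eval_fuel k' f (j :: xs) = Some (S z)).
  { induction n' as [|n' IH]; intros Hn'; [exists 0; intros; lia|].
    destruct IH as [k2 Hk2]; [lia|].
    destruct (Hbelow n') as [k3 [z Hz]]; [lia|].
    exists (max k2 k3). intros k' Hk' j Hj.
    destruct (Nat.eq_dec j n') as [->|]; [exists z; eapply eval_fuel_mono; eauto; lia|].
    apply Hk2; lia. }
  destruct (Hpre n (le_n _)) as [k2 Hk2].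
  exists (max (S n) (max k1 k2)). apply mu_search_complete; [| |lia].
  - eapply eval_fuel_mono; [exact Hk1|lia].
  - intros j Hj. apply Hk2; lia.
Qed.

Lemma eval_fuel_complete : forall t xs y, evalp t xs y -> exists k, eval_fuel k t xs = Some y.
Proof.
  fix IH 4. intros t xs y H. destruct H as
    [xs|xs|i xs|f gs xs ys y Hgs Hf|f g xs y Hf|f g n xs r y Hr Hg|f xs n Hn Hbelow].
  - now exists 0.
  - now exists 0.
  - now exists 0.
  - destruct (IH _ _ _ Hf) as [k1 Hk1].
    assert (Hargs : exists k, forall k', k <= k' ->
              all_some (map (fun g => eval_fuel k' g xs) gs) = Some ys).
    { clear Hf Hk1. revert gs ys Hgs.
      refine (fix args gs ys (Hgs : Forall2 (fun g z => evalp g xs z) gs ys) {struct Hgs} := _).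
      destruct Hgs as [|g z gs' zs Hg Hgs'].
      - exists 0. reflexivity.
      - destruct (IH _ _ _ Hg) as [k2 Hk2]. destruct (args _ _ Hgs') as [k3 Hk3].
        exists (max k2 k3). intros k' Hk'. simpl.
        rewrite (eval_fuel_mono _ _ k' _ _ Hk2) by lia. now rewrite Hk3 by lia. }
    destruct Hargs as [k2 Hk2]. exists (max k1 k2).
    rewrite eval_fuel_PComp, Hk2 by lia. eapply eval_fuel_mono; eauto; lia.
  - destruct (IH _ _ _ Hf) as [k Hk]. now exists k.
  - destruct (IH _ _ _ Hr) as [k1 Hk1]. destruct (IH _ _ _ Hg) as [k2 Hk2].
    exists (max k1 k2).
    assert (Hprev : eval_fuel (max k1 k2) (PRec f g) (n :: xs) = Some r)
      by (eapply eval_fuel_mono; [exact Hk1|lia]).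
    simpl in Hprev |- *. rewrite Hprev. eapply eval_fuel_mono; eauto; lia.
  - apply eval_fuel_mu_complete; [exact (IH _ _ _ Hn)|].
    intros m Hm. destruct (Hbelow m Hm) as [z Hz]. destruct (IH _ _ _ Hz) as [k Hk]. eauto.
Qed.

Lemma evalp_functional t xs y y' : evalp t xs y -> evalp t xs y' -> y = y'.
Proof.
  intros H H'.
  apply eval_fuel_complete in H as [k H]. apply eval_fuel_complete in H' as [k' H'].
  apply (eval_fuel_mono _ _ (max k k')) in H, H'; try lia. congruence.
Qed.

(** * Total recursive functions *)

Definition recursive (n : nat) (f : list nat -> nat) : Prop :=
  exists t, forall xs, length xs = n -> evalp t xs (f xs).

Definition recursive_pred (n : nat) (P : list nat -> bool) : Prop :=
  recursive n (fun xs => Nat.b2n (P xs)).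

Lemma recursive_ext n f g :
  (forall xs, length xs = n -> f xs = g xs) -> recursive n f -> recursive n g.
Proof. intros E [t Ht]. exists t. intros xs L. rewrite <- E by exact L. auto. Qed.

Lemma recursive_pred_ext n P Q :
  (forall xs, length xs = n -> P xs = Q xs) -> recursive_pred n P -> recursive_pred n Q.
Proof. intros E. apply recursive_ext. intros xs L. now rewrite E. Qed.

Lemma recursive_proj n i : recursive n (fun xs => nth i xs 0).
Proof. exists (PProj i). constructor. Qed.

Lemma recursive_succ n f : recursive n f -> recursive n (fun xs => S (f xs)).
Proof.
  intros [t Ht]. exists (PComp PSucc [t]). intros xs L.
  apply ev_comp with [f xs]; [constructor; auto|constructor].
Qed.

Lemma recursive_const n c : recursive n (fun _ => c).
Proof.
  induction c as [|c IH]; [exists PZero; constructor|]. exact (recursive_succ _ _ IH).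
Qed.

Lemma recursive_comp n m g fs : recursive m g -> length fs = m -> Forall (recursive n) fs ->
  recursive n (fun xs => g (map (fun f => f xs) fs)).
Proof.
  intros [tg Hg] Hlen Hfs.
  assert (Hts : exists ts,
            Forall2 (fun f t => forall xs, length xs = n -> evalp t xs (f xs)) fs ts).
  { clear Hlen. induction Hfs as [|f fs [t Ht] _ [ts IH]]; [now exists []|].
    exists (t :: ts). now constructor. }
  destruct Hts as [ts Hts]. exists (PComp tg ts). intros xs L.
  apply ev_comp with (map (fun f => f xs) fs).
  - clear - Hts L. induction Hts; constructor; auto.
  - apply Hg. now rewrite length_map.
Qed.

Definition projs (j n : nat) : list (list nat -> nat) := map (fun i xs => nth i xs 0) (seq j n).

Lemma length_projs j n : length (projs j n) = n.
Proof. unfold projs. now rewrite length_map, length_seq. Qed.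

Lemma projs_recursive n j m : Forall (recursive n) (projs j m).
Proof.
  apply Forall_forall. intros f Hf. unfold projs in Hf.
  apply in_map_iff in Hf as [i [<- _]]. apply recursive_proj.
Qed.

Lemma skipn_nth (xs : list nat) j : j < length xs -> skipn j xs = nth j xs 0 :: skipn (S j) xs.
Proof.
  revert xs; induction j as [|j IH]; intros [|x xs] H; simpl in *; try lia; auto.
  apply IH. lia.
Qed.

Lemma map_projs xs j n : length xs = j + n -> map (fun f => f xs) (projs j n) = skipn j xs.
Proof.
  unfold projs. rewrite map_map. revert j; induction n as [|n IH]; intros j L; simpl.
  - rewrite skipn_all2; auto. lia.
  - rewrite IH by lia. symmetry. apply skipn_nth. lia.
Qed.

Lemma recursive_rec_head n f g : recursive n f -> recursive (S (S n)) g ->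
  recursive (S n) (fun xs => nat_rect (fun _ => nat) (f (tl xs))
                               (fun k r => g (k :: r :: tl xs)) (hd 0 xs)).
Proof.
  intros [tf Hf] [tg Hg]. exists (PRec tf tg).
  intros [|m ys] L; simpl in L; [discriminate|]. injection L as L. simpl.
  induction m as [|m IH]; simpl.
  - constructor. auto.
  - econstructor; [exact IH|]. apply Hg. simpl. auto.
Qed.

Lemma recursive_rec n N f g : recursive n N -> recursive n f -> recursive (S (S n)) g ->
  recursive n (fun xs => nat_rect (fun _ => nat) (f xs) (fun k r => g (k :: r :: xs)) (N xs)).
Proof.
  intros HN Hf Hg.
  eapply recursive_ext;
    [|apply (recursive_comp n (S n) _ (N :: projs 0 n) (recursive_rec_head n f g Hf Hg))].
  - intros xs L. simpl. now rewrite map_projs by auto.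
  - simpl. now rewrite length_projs.
  - constructor; [exact HN|apply projs_recursive].
Qed.

Lemma recursive_drop2nd n p : recursive (S n) p ->
  recursive (S (S n)) (fun zs => p (hd 0 zs :: tl (tl zs))).
Proof.
  intros Hp.
  eapply recursive_ext;
    [|apply (recursive_comp (S (S n)) (S n) p ((fun zs => nth 0 zs 0) :: projs 2 n) Hp)].
  - intros [|k [|r xs]] L; simpl in L; try discriminate. simpl.
    rewrite map_projs by (simpl; lia). reflexivity.
  - simpl. now rewrite length_projs.
  - constructor; [apply recursive_proj|apply projs_recursive].
Qed.

Definition recursive1 (g : nat -> nat) : Prop := recursive 1 (fun xs => g (nth 0 xs 0)).
Definition recursive2 (g : nat -> nat -> nat) : Prop :=
  recursive 2 (fun xs => g (nth 0 xs 0) (nth 1 xs 0)).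
Definition recursive3 (g : nat -> nat -> nat -> nat) : Prop :=
  recursive 3 (fun xs => g (nth 0 xs 0) (nth 1 xs 0) (nth 2 xs 0)).
Definition recursive_pred2 (p : nat -> nat -> bool) : Prop :=
  recursive_pred 2 (fun xs => p (nth 0 xs 0) (nth 1 xs 0)).
Definition recursive_pred3 (p : nat -> nat -> nat -> bool) : Prop :=
  recursive_pred 3 (fun xs => p (nth 0 xs 0) (nth 1 xs 0) (nth 2 xs 0)).

Lemma recursive_comp1 n g f : recursive1 g -> recursive n f -> recursive n (fun xs => g (f xs)).
Proof. intros Hg Hf. eapply recursive_ext; [|apply (recursive_comp n 1 _ [f] Hg)]; auto. Qed.

Lemma recursive_comp2 n g f1 f2 : recursive2 g -> recursive n f1 -> recursive n f2 ->
  recursive n (fun xs => g (f1 xs) (f2 xs)).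
Proof.
  intros Hg H1 H2. eapply recursive_ext; [|apply (recursive_comp n 2 _ [f1; f2] Hg)]; auto.
Qed.

Lemma recursive_comp3 n g f1 f2 f3 :
  recursive3 g -> recursive n f1 -> recursive n f2 -> recursive n f3 ->
  recursive n (fun xs => g (f1 xs) (f2 xs) (f3 xs)).
Proof.
  intros Hg H1 H2 H3.
  eapply recursive_ext; [|apply (recursive_comp n 3 _ [f1; f2; f3] Hg)]; auto.
Qed.

Lemma recursive_pred_comp2 n p f1 f2 : recursive_pred2 p -> recursive n f1 -> recursive n f2 ->
  recursive_pred n (fun xs => p (f1 xs) (f2 xs)).
Proof. apply (recursive_comp2 n (fun a b => Nat.b2n (p a b))). Qed.

Lemma recursive_pred_comp3 n p f1 f2 f3 :
  recursive_pred3 p -> recursive n f1 -> recursive n f2 -> recursive n f3 ->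
  recursive_pred n (fun xs => p (f1 xs) (f2 xs) (f3 xs)).
Proof. apply (recursive_comp3 n (fun a b c => Nat.b2n (p a b c))). Qed.

Lemma recursive_if n c a b : recursive_pred n c -> recursive n a -> recursive n b ->
  recursive n (fun xs => if c xs then a xs else b xs).
Proof.
  intros Hc Ha Hb.
  set (cond := fun c a b : nat => match c with 0 => b | S _ => a end).
  assert (Hcond : recursive3 cond).
  { eapply recursive_ext;
      [|exact (recursive_rec_head 2 (fun ys => nth 1 ys 0) (fun zs => nth 2 zs 0)
                 (recursive_proj _ _) (recursive_proj _ _))].
    intros [|c' [|a' [|b' [|]]]] L; simpl in L; try discriminate. now destruct c'. }
  eapply recursive_ext; [|exact (recursive_comp3 n cond _ _ _ Hcond Hc Ha Hb)].
  intros xs _. cbv beta. now destruct (c xs).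
Qed.

Lemma recursive_pos n f : recursive n f -> recursive_pred n (fun xs => 0 <? f xs).
Proof.
  intros Hf.
  assert (Hsg : recursive1 (fun x => Nat.b2n (0 <? x))).
  { eapply recursive_ext; [|exact (recursive_rec_head 0 (fun _ => 0) (fun _ => 1)
                                     (recursive_const _ _) (recursive_const _ _))].
    intros [|[|x] [|]] L; simpl in L; try discriminate; reflexivity. }
  exact (recursive_comp1 n _ f Hsg Hf).
Qed.

Lemma recursive_negb n c : recursive_pred n c -> recursive_pred n (fun xs => negb (c xs)).
Proof.
  intros Hc. eapply recursive_ext;
    [|exact (recursive_if n c _ _ Hc (recursive_const n 0) (recursive_const n 1))].
  intros xs _. cbv beta. now destruct (c xs).
Qed.

Lemma recursive_andb n c d : recursive_pred n c -> recursive_pred n d ->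
  recursive_pred n (fun xs => c xs && d xs).
Proof.
  intros Hc Hd. eapply recursive_ext; [|exact (recursive_if n c _ _ Hc Hd (recursive_const n 0))].
  intros xs _. cbv beta. now destruct (c xs).
Qed.

Lemma recursive_orb n c d : recursive_pred n c -> recursive_pred n d ->
  recursive_pred n (fun xs => c xs || d xs).
Proof.
  intros Hc Hd. eapply recursive_ext; [|exact (recursive_if n c _ _ Hc (recursive_const n 1) Hd)].
  intros xs _. cbv beta. now destruct (c xs).
Qed.

Lemma recursive_implb n c d : recursive_pred n c -> recursive_pred n d ->
  recursive_pred n (fun xs => implb (c xs) (d xs)).
Proof.
  intros Hc Hd. eapply recursive_ext; [|exact (recursive_if n c _ _ Hc Hd (recursive_const n 1))].
  intros xs _. cbv beta. now destruct (c xs).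
Qed.

Create HintDb recursive.

Ltac solve_recursive :=
  repeat match goal with
  | |- recursive1 _ => solve [eauto with recursive]
  | |- recursive2 _ => solve [eauto with recursive]
  | |- recursive3 _ => solve [eauto with recursive]
  | |- recursive_pred2 _ => solve [eauto with recursive]
  | |- recursive_pred3 _ => solve [eauto with recursive]
  | |- recursive _ (fun _ => nth _ _ 0) => apply recursive_proj
  | |- recursive _ (fun _ => ?c) => apply recursive_const
  | |- recursive _ (fun xs => S (@?a xs)) => apply recursive_succ
  | |- recursive _ (fun xs => if @?c xs then @?a xs else @?b xs) => apply recursive_if
  | |- recursive_pred _ (fun xs => negb (@?c xs)) => apply recursive_negb
  | |- recursive_pred _ (fun xs => @?c xs && @?d xs) => apply recursive_andb
  | |- recursive_pred _ (fun xs => @?c xs || @?d xs) => apply recursive_orb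
  | |- recursive_pred _ (fun xs => implb (@?c xs) (@?d xs)) => apply recursive_implb
  | |- recursive_pred _ (fun xs => 0 <? @?a xs) => apply recursive_pos
  | |- recursive_pred ?n (fun xs => ?p (@?a xs) (@?b xs) (@?c xs)) =>
      apply (recursive_pred_comp3 n p a b c); [solve [eauto with recursive]|..]
  | |- recursive_pred ?n (fun xs => ?p (@?a xs) (@?b xs)) =>
      apply (recursive_pred_comp2 n p a b); [solve [eauto with recursive]|..]
  | |- recursive ?n (fun xs => ?g (@?a xs) (@?b xs) (@?c xs)) =>
      apply (recursive_comp3 n g a b c); [solve [eauto with recursive]|..]
  | |- recursive ?n (fun xs => ?g (@?a xs) (@?b xs)) =>
      apply (recursive_comp2 n g a b); [solve [eauto with recursive]|..]
  | |- recursive ?n (fun xs => ?g (@?a xs)) =>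
      apply (recursive_comp1 n g a); [solve [eauto with recursive]|..]
  end.

Lemma recursive2_add : recursive2 Nat.add.
Proof.
  eapply recursive_ext; [|exact (recursive_rec_head 1 (fun ys => nth 0 ys 0)
    (fun zs => S (nth 1 zs 0)) (recursive_proj _ _) (recursive_succ _ _ (recursive_proj _ _)))].
  intros [|a [|b [|]]] L; simpl in L; try discriminate. simpl.
  induction a; simpl; auto.
Qed.
#[export] Hint Resolve recursive2_add : recursive.

Lemma recursive2_mul : recursive2 Nat.mul.
Proof.
  assert (Hstep : recursive 3 (fun zs => nth 2 zs 0 + nth 1 zs 0)) by solve_recursive.
  eapply recursive_ext; [|exact (recursive_rec_head 1 _ _ (recursive_const _ 0) Hstep)].
  intros [|a [|b [|]]] L; simpl in L; try discriminate. simpl.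
  induction a; simpl; lia.
Qed.

Lemma recursive1_pred : recursive1 Nat.pred.
Proof.
  eapply recursive_ext; [|exact (recursive_rec_head 0 (fun _ => 0) (fun zs => nth 0 zs 0)
                                   (recursive_const _ _) (recursive_proj _ _))].
  intros [|a [|]] L; simpl in L; try discriminate. now destruct a.
Qed.
#[export] Hint Resolve recursive2_mul recursive1_pred : recursive.

Lemma recursive2_sub : recursive2 Nat.sub.
Proof.
  assert (Hstep : recursive 4 (fun zs => Nat.pred (nth 1 zs 0))) by solve_recursive.
  eapply recursive_ext; [|exact (recursive_rec 2 (fun xs => nth 1 xs 0) (fun xs => nth 0 xs 0) _
                                   (recursive_proj _ _) (recursive_proj _ _) Hstep)].
  intros [|a [|b [|]]] L; simpl in L; try discriminate. simpl.
  induction b as [|b IH]; simpl; lia.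
Qed.
#[export] Hint Resolve recursive2_sub : recursive.

Lemma recursive_pred2_ltb : recursive_pred2 Nat.ltb.
Proof.
  eapply recursive_pred_ext with (P := fun xs => 0 <? nth 1 xs 0 - nth 0 xs 0); [|solve_recursive].
  intros xs _. apply eq_true_iff_eq. rewrite !Nat.ltb_lt. lia.
Qed.

Lemma recursive_pred2_eqb : recursive_pred2 Nat.eqb.
Proof.
  eapply recursive_pred_ext
    with (P := fun xs => negb (0 <? (nth 0 xs 0 - nth 1 xs 0) + (nth 1 xs 0 - nth 0 xs 0)));
    [|solve_recursive].
  intros xs _. apply eq_true_iff_eq. rewrite negb_true_iff, Nat.ltb_ge, Nat.eqb_eq. lia.
Qed.
#[export] Hint Resolve recursive_pred2_ltb recursive_pred2_eqb : recursive.

Lemma recursive_pred2_leb : recursive_pred2 Nat.leb.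
Proof.
  eapply recursive_pred_ext with (P := fun xs => negb (0 <? nth 0 xs 0 - nth 1 xs 0));
    [|solve_recursive].
  intros xs _. apply eq_true_iff_eq. rewrite negb_true_iff, Nat.ltb_ge, Nat.leb_le. lia.
Qed.
#[export] Hint Resolve recursive_pred2_leb : recursive.

(* [bmin p b] is the least [j < b] with [p j], and [b] if there is none. *)
Fixpoint bmin (p : nat -> bool) (b : nat) : nat :=
  match b with
  | 0 => 0
  | S b' => let r := bmin p b' in if r <? b' then r else if p b' then b' else b
  end.

Lemma bmin_le p b : bmin p b <= b.
Proof.
  induction b as [|b IH]; simpl; auto.
  destruct (Nat.ltb_spec (bmin p b) b); [lia|]. destruct (p b); lia.
Qed.

Lemma bmin_spec p b :
  (bmin p b < b -> p (bmin p b) = true) /\ (forall j, j < bmin p b -> p j = false).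
Proof.
  induction b as [|b [IH1 IH2]]; simpl; [split; intros; lia|].
  pose proof (bmin_le p b).
  destruct (Nat.ltb_spec (bmin p b) b); [split; auto|].
  assert (E : bmin p b = b) by lia. rewrite E in IH2.
  destruct (p b) eqn:Ep; split; try (intros; lia); auto.
  intros j Hj. destruct (Nat.eq_dec j b) as [->|]; auto. apply IH2. lia.
Qed.

Lemma bmin_found p b : bmin p b < b -> p (bmin p b) = true.
Proof. apply bmin_spec. Qed.

Lemma bmin_below p b j : j < bmin p b -> p j = false.
Proof. apply bmin_spec. Qed.

Lemma bmin_le_witness p b j : j < b -> p j = true -> bmin p b <= j.
Proof.
  intros Hj Hp. destruct (Nat.le_gt_cases (bmin p b) j); auto.
  rewrite (bmin_below p b j) in Hp by lia. discriminate.
Qed.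

Lemma bmin_eq p b w : w < b -> p w = true -> (forall j, j < w -> p j = false) -> bmin p b = w.
Proof.
  intros Hw Hp Hbelow. pose proof (bmin_le_witness p b w Hw Hp).
  destruct (Nat.eq_dec (bmin p b) w); auto.
  pose proof (bmin_found p b ltac:(lia)) as Hfound.
  rewrite Hbelow in Hfound; [discriminate|lia].
Qed.

Lemma recursive_bmin n B p : recursive n B -> recursive_pred (S n) p ->
  recursive n (fun xs => bmin (fun m => p (m :: xs)) (B xs)).
Proof.
  intros HB Hp.
  assert (Hstep : recursive (S (S n)) (fun zs =>
            if nth 1 zs 0 <? nth 0 zs 0 then nth 1 zs 0
            else if p (hd 0 zs :: tl (tl zs)) then nth 0 zs 0 else S (nth 0 zs 0))).
  { apply recursive_if; [solve_recursive|apply recursive_proj|].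
    apply recursive_if; [exact (recursive_drop2nd n _ Hp)|apply recursive_proj|solve_recursive]. }
  eapply recursive_ext;
    [|exact (recursive_rec n B (fun _ => 0) _ HB (recursive_const _ _) Hstep)].
  intros xs _. simpl. induction (B xs) as [|b IH]; simpl; [reflexivity|]. now rewrite IH.
Qed.

Lemma existsb_seq_bmin p b : existsb p (seq 0 b) = (bmin p b <? b).
Proof.
  apply eq_true_iff_eq. rewrite existsb_exists, Nat.ltb_lt. split.
  - intros [j [Hj Hp]]. apply in_seq in Hj. pose proof (bmin_le_witness p b j ltac:(lia) Hp). lia.
  - intros H. exists (bmin p b). split; [apply in_seq; lia|]. now apply bmin_found.
Qed.

Lemma forallb_negb_existsb {A} (p : A -> bool) l :
  forallb p l = negb (existsb (fun x => negb (p x)) l).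
Proof. induction l as [|x l IH]; simpl; [reflexivity|]. rewrite IH. now destruct (p x). Qed.

Lemma recursive_existsb n B p : recursive n B -> recursive_pred (S n) p ->
  recursive_pred n (fun xs => existsb (fun m => p (m :: xs)) (seq 0 (B xs))).
Proof.
  intros HB Hp.
  eapply recursive_pred_ext; [intros xs _; symmetry; apply existsb_seq_bmin|].
  apply (recursive_pred_comp2 n Nat.ltb); [solve_recursive| |exact HB].
  now apply recursive_bmin.
Qed.

Lemma recursive_forallb n B p : recursive n B -> recursive_pred (S n) p ->
  recursive_pred n (fun xs => forallb (fun m => p (m :: xs)) (seq 0 (B xs))).
Proof.
  intros HB Hp.
  eapply recursive_pred_ext; [intros xs _; symmetry; apply forallb_negb_existsb|].
  apply recursive_negb, (recursive_existsb n B (fun zs => negb (p zs))); auto.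
  now apply recursive_negb.
Qed.

Lemma div_bmin a b : a / b = if b =? 0 then 0 else bmin (fun m => a <? S m * b) (S a).
Proof.
  destruct (Nat.eqb_spec b 0) as [->|Hb]; [apply Nat.div_0_r|].
  pose proof (Nat.div_mod a b Hb). pose proof (Nat.mod_upper_bound a b Hb).
  symmetry. apply bmin_eq.
  - nia.
  - apply Nat.ltb_lt. nia.
  - intros j Hj. apply Nat.ltb_ge. nia.
Qed.

Lemma recursive2_div : recursive2 Nat.div.
Proof.
  eapply recursive_ext; [intros xs _; symmetry; apply div_bmin|].
  apply recursive_if; [solve_recursive|solve_recursive|].
  apply (recursive_bmin 2 (fun xs => S (nth 0 xs 0))
           (fun zs => nth 1 zs 0 <? S (nth 0 zs 0) * nth 2 zs 0)); solve_recursive.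
Qed.
#[export] Hint Resolve recursive2_div : recursive.

Lemma recursive2_mod : recursive2 Nat.modulo.
Proof.
  eapply recursive_ext with (f := fun xs => nth 0 xs 0 - nth 1 xs 0 * (nth 0 xs 0 / nth 1 xs 0));
    [|solve_recursive].
  intros xs _. pose proof (Nat.div_mod_eq (nth 0 xs 0) (nth 1 xs 0)). lia.
Qed.

Lemma recursive2_pow : recursive2 Nat.pow.
Proof.
  assert (Hstep : recursive 4 (fun zs => nth 2 zs 0 * nth 1 zs 0)) by solve_recursive.
  eapply recursive_ext; [|exact (recursive_rec 2 (fun xs => nth 1 xs 0) (fun _ => 1) _
                                   (recursive_proj _ _) (recursive_const _ _) Hstep)].
  intros xs _. simpl. induction (nth 1 xs 0) as [|b IH]; simpl; congruence.
Qed.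
#[export] Hint Resolve recursive2_mod recursive2_pow : recursive.

Lemma recursive_pred2_testbit : recursive_pred2 Nat.testbit.
Proof.
  eapply recursive_pred_ext; [intros xs _; symmetry; apply Nat.testbit_eqb|]. solve_recursive.
Qed.
#[export] Hint Resolve recursive_pred2_testbit : recursive.

(** * Cantor pairing *)

Lemma recursive2_cpair : recursive2 cpair.
Proof. unfold recursive2, cpair. solve_recursive. Qed.
#[export] Hint Resolve recursive2_cpair : recursive.

Definition tri (w : nat) : nat := w * (w + 1) / 2.

Lemma cpair_tri x y : cpair x y = tri (x + y) + y.
Proof. reflexivity. Qed.

Lemma tri_S w : tri (S w) = tri w + S w.
Proof.
  unfold tri. replace (S w * (S w + 1)) with (w * (w + 1) + S w * 2) by nia.
  rewrite Nat.div_add by lia. lia.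
Qed.

Lemma tri_mono a b : a <= b -> tri a <= tri b.
Proof. induction 1; auto. rewrite tri_S. lia. Qed.

Lemma le_tri w : w <= tri w.
Proof. induction w; auto. rewrite tri_S. lia. Qed.

Definition cdiag (z : nat) : nat := bmin (fun w => z <? tri (S w)) (S z).
Definition csnd (z : nat) : nat := z - tri (cdiag z).
Definition cfst (z : nat) : nat := cdiag z - csnd z.

Lemma cdiag_spec z : tri (cdiag z) <= z < tri (S (cdiag z)).
Proof.
  unfold cdiag. set (p := fun w => z <? tri (S w)).
  assert (Hz : p z = true) by (apply Nat.ltb_lt; pose proof (le_tri (S z)); lia).
  pose proof (bmin_le_witness p (S z) z ltac:(lia) Hz).
  pose proof (bmin_found p (S z) ltac:(lia)) as Hfound.
  pose proof (bmin_below p (S z)) as Hbelow.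
  destruct (bmin p (S z)) as [|w]; unfold p in Hfound; apply Nat.ltb_lt in Hfound.
  - split; [unfold tri; simpl; lia|exact Hfound].
  - specialize (Hbelow w ltac:(lia)). apply Nat.ltb_ge in Hbelow. lia.
Qed.

Lemma cpair_cfst_csnd z : cpair (cfst z) (csnd z) = z.
Proof.
  pose proof (cdiag_spec z) as H. rewrite tri_S in H. unfold cfst, csnd. rewrite cpair_tri.
  replace (cdiag z - (z - tri (cdiag z)) + (z - tri (cdiag z))) with (cdiag z) by lia. lia.
Qed.

Lemma cdiag_cpair x y : cdiag (cpair x y) = x + y.
Proof.
  unfold cdiag. rewrite cpair_tri. apply bmin_eq.
  - pose proof (le_tri (x + y)). lia.
  - apply Nat.ltb_lt. rewrite tri_S. lia.
  - intros j Hj. apply Nat.ltb_ge. pose proof (tri_mono (S j) (x + y)). lia.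
Qed.

Lemma csnd_cpair x y : csnd (cpair x y) = y.
Proof. unfold csnd. rewrite cdiag_cpair, cpair_tri. lia. Qed.

Lemma cfst_cpair x y : cfst (cpair x y) = x.
Proof. unfold cfst. rewrite csnd_cpair, cdiag_cpair. lia. Qed.

Lemma cpair_ge_fst x y : x <= cpair x y.
Proof. rewrite cpair_tri. pose proof (le_tri (x + y)). lia. Qed.

Lemma cpair_ge_snd x y : y <= cpair x y.
Proof. rewrite cpair_tri. lia. Qed.

Lemma recursive1_tri : recursive1 tri.
Proof. unfold recursive1, tri. solve_recursive. Qed.
#[export] Hint Resolve recursive1_tri : recursive.

Lemma recursive1_cdiag : recursive1 cdiag.
Proof.
  apply (recursive_bmin 1 (fun xs => S (nth 0 xs 0))
           (fun zs => nth 1 zs 0 <? tri (S (nth 0 zs 0)))); solve_recursive.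
Qed.
#[export] Hint Resolve recursive1_cdiag : recursive.

Lemma recursive1_csnd : recursive1 csnd.
Proof. unfold recursive1, csnd. solve_recursive. Qed.
#[export] Hint Resolve recursive1_csnd : recursive.

Lemma recursive1_cfst : recursive1 cfst.
Proof. unfold recursive1, cfst. solve_recursive. Qed.
#[export] Hint Resolve recursive1_cfst : recursive.

(** * Step-bounded evaluation is total recursive *)

(* The fuel comes first; [None] is coded as 0. *)
Definition eval_code (t : prf) (zs : list nat) : nat :=
  code_elem (eval_fuel (hd 0 zs) t (tl zs)).

Lemma recursive_all_pos : forall m n j, j + m <= n ->
  recursive_pred n (fun w => forallb (fun c => 0 <? c) (firstn m (skipn j w))).
Proof.
  induction m as [|m IH]; intros n j Hj; [exact (recursive_const n 1)|].
  eapply recursive_pred_ext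
    with (P := fun w => (0 <? nth j w 0) && forallb (fun c => 0 <? c) (firstn m (skipn (S j) w))).
  - intros w L. now rewrite (skipn_nth w j) by lia.
  - apply recursive_andb; [solve_recursive|apply IH; lia].
Qed.

Lemma all_some_code (l : list (option nat)) :
  match all_some l with
  | Some ys => forallb (fun c => 0 <? c) (map code_elem l) = true /\
               map pred (map code_elem l) = ys
  | None => forallb (fun c => 0 <? c) (map code_elem l) = false
  end.
Proof.
  induction l as [|[z|] l IH]; simpl; auto.
  destruct (all_some l) as [ys|]; simpl; [|exact IH].
  destruct IH as [-> ->]. auto.
Qed.

Lemma recursive_decr_tl m F : recursive (S m) F ->
  recursive (S m) (fun w => F (hd 0 w :: map pred (tl w))).
Proof.
  intros HF.
  eapply recursive_ext; [|apply (recursive_comp (S m) (S m) F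
    ((fun w => nth 0 w 0) :: map (fun i w => pred (nth i w 0)) (seq 1 m)) HF)].
  - intros [|k w] L; simpl in L; [discriminate|]. simpl. do 2 f_equal.
    rewrite map_map, <- (map_map (fun i => nth i (k :: w) 0) pred).
    change (fun i => nth i (k :: w) 0) with (fun i => (fun f => f (k :: w)) (fun xs => nth i xs 0)).
    rewrite <- (map_map (fun i xs => nth i xs 0) (fun f => f (k :: w))).
    fold (projs 1 m). rewrite map_projs by (simpl; lia). reflexivity.
  - simpl. now rewrite length_map, length_seq.
  - constructor; [apply recursive_proj|].
    apply Forall_forall. intros f Hf. apply in_map_iff in Hf as [i [<- _]]. solve_recursive.
Qed.

Lemma recursive_eval_code_comp f gs :
  (forall n, recursive (S n) (eval_code f)) ->
  Forall (fun g => forall n, recursive (S n) (eval_code g)) gs ->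
  forall n, recursive (S n) (eval_code (PComp f gs)).
Proof.
  intros Hf Hgs n. set (m := length gs).
  set (outer := fun w => if forallb (fun c => 0 <? c) (tl w)
                         then eval_code f (hd 0 w :: map pred (tl w)) else 0).
  assert (Houter : recursive (S m) outer).
  { apply recursive_if; [|apply recursive_decr_tl, Hf|apply recursive_const].
    eapply recursive_pred_ext; [|apply (recursive_all_pos m (S m) 1); lia].
    intros [|k w] L; simpl in L; [discriminate|]. simpl. now rewrite firstn_all2 by lia. }
  eapply recursive_ext;
    [|apply (recursive_comp (S n) (S m) outer ((fun zs => nth 0 zs 0) :: map eval_code gs) Houter)].
  - intros [|k xs] L; simpl in L; [discriminate|].
    unfold outer. cbn [map hd tl nth]. rewrite map_map.
    change (eval_code (PComp f gs) (k :: xs)) with (code_elem (eval_fuel k (PComp f gs) xs)).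
    rewrite eval_fuel_PComp.
    replace (map (fun g => eval_code g (k :: xs)) gs)
      with (map code_elem (map (fun g => eval_fuel k g xs) gs)) by now rewrite map_map.
    pose proof (all_some_code (map (fun g => eval_fuel k g xs) gs)) as Hcode.
    destruct (all_some (map (fun g => eval_fuel k g xs) gs)) as [ys|].
    + destruct Hcode as [-> ->]. reflexivity.
    + now rewrite Hcode.
  - simpl. now rewrite length_map.
  - constructor; [apply recursive_proj|]. apply Forall_map.
    eapply Forall_impl; [|exact Hgs]. auto.
Qed.

Lemma recursive_eval_code_rec f g :
  (forall n, recursive (S n) (eval_code f)) -> (forall n, recursive (S n) (eval_code g)) ->
  forall n, recursive (S n) (eval_code (PRec f g)).
Proof.
  intros Hf Hg [|n].
  { eapply recursive_ext; [|apply (recursive_const _ 0)].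
    intros [|k [|]] L; simpl in L; try discriminate. reflexivity. }
  assert (Hstep : recursive (S (S (S (S n)))) (fun w =>
            if 0 <? nth 1 w 0
            then eval_code g (nth 2 w 0 :: nth 0 w 0 :: pred (nth 1 w 0) :: skipn 4 w)
            else 0)).
  { apply recursive_if; [solve_recursive| |apply recursive_const].
    eapply recursive_ext; [|apply (recursive_comp (S (S (S (S n)))) (S (S (S n))) _
      ((fun w => nth 2 w 0) :: (fun w => nth 0 w 0) :: (fun w => pred (nth 1 w 0)) :: projs 4 n)
      (Hg (S (S n))))].
    - intros w L. simpl. now rewrite map_projs by lia.
    - simpl. now rewrite length_projs.
    - repeat constructor; try apply recursive_proj; [solve_recursive|apply projs_recursive]. }
  eapply recursive_ext; [|exact (recursive_rec (S (S n)) (fun zs => nth 1 zs 0)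
    (fun zs => eval_code f (hd 0 zs :: tl (tl zs))) _
    (recursive_proj _ _) (recursive_drop2nd _ _ (Hf n)) Hstep)].
  intros [|k [|m ys]] L; simpl in L; try discriminate. unfold eval_code. simpl.
  induction m as [|m IH]; simpl; [reflexivity|].
  rewrite IH. now destruct (nat_rect (fun _ => option nat) (eval_fuel k f ys) _ m).
Qed.

(* The first [m < k] where [F m] is undefined or 0 decides the search. *)
Lemma mu_search_code F k :
  code_elem (mu_search F k 0) =
  let M := bmin (fun m => code_elem (F m) <? 2) k in
  if M <? k then (if code_elem (F M) =? 1 then S M else 0) else 0.
Proof.
  cbv zeta. set (p := fun m => code_elem (F m) <? 2).
  assert (Hpre : forall j, j < bmin p k -> exists z, F (0 + j) = Some (S z)).
  { intros j Hj. pose proof (bmin_below p k j Hj) as Hj'. unfold p in Hj'.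
    destruct (F j) as [[|z]|] eqn:E; simpl in Hj'; try discriminate. eauto. }
  rewrite (mu_search_skip F (bmin p k) k 0 (bmin_le p k) Hpre). simpl.
  destruct (Nat.ltb_spec (bmin p k) k) as [Hlt|Hge].
  - assert (Hf : code_elem (F (bmin p k)) <? 2 = true) by exact (bmin_found p k Hlt).
    destruct (k - bmin p k) eqn:E; [lia|]. simpl.
    destruct (F (bmin p k)) as [[|z]|]; simpl in *; auto. discriminate.
  - now replace (k - bmin p k) with 0 by lia.
Qed.

Lemma recursive_eval_code_mu f :
  (forall n, recursive (S n) (eval_code f)) -> forall n, recursive (S n) (eval_code (PMu f)).
Proof.
  intros Hf n.
  set (Fq := fun ws => eval_code f (nth 1 ws 0 :: nth 0 ws 0 :: tl (tl ws))).
  assert (HFq : recursive (S (S n)) Fq).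
  { eapply recursive_ext; [|apply (recursive_comp (S (S n)) (S (S n)) (eval_code f)
      ((fun w => nth 1 w 0) :: (fun w => nth 0 w 0) :: projs 2 n) (Hf (S n)))].
    - intros [|a [|b ws]] L; simpl in L; try discriminate. unfold Fq. simpl.
      now rewrite map_projs by (simpl; lia).
    - simpl. now rewrite length_projs.
    - repeat constructor; try apply recursive_proj. apply projs_recursive. }
  set (M := fun zs => bmin (fun m => Fq (m :: zs) <? 2) (nth 0 zs 0)).
  assert (HM : recursive (S n) M).
  { apply (recursive_bmin (S n) (fun zs => nth 0 zs 0) (fun ws => Fq ws <? 2));
    solve_recursive; exact HFq. }
  assert (Hres : recursive (S (S n)) (fun w =>
            if nth 0 w 0 <? nth 1 w 0 then (if Fq w =? 1 then S (nth 0 w 0) else 0) else 0))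
    by (solve_recursive; exact HFq).
  eapply recursive_ext; [|apply (recursive_comp (S n) (S (S n)) _ (M :: projs 0 (S n)) Hres)].
  - intros [|k xs] L; simpl in L; [discriminate|].
    cbn [map]. rewrite map_projs by (simpl; lia).
    unfold eval_code. simpl. now rewrite mu_search_code.
  - cbn [length]. now rewrite length_projs.
  - constructor; [exact HM|apply projs_recursive].
Qed.

(* A form of Kleene's normal form theorem. *)
Lemma recursive_eval_code : forall t n, recursive (S n) (eval_code t).
Proof.
  induction t as [| |i|f gs IHf IHgs|f g IHf IHg|f IHf] using prf_nested_ind; intros n.
  - eapply recursive_ext; [|apply (recursive_const _ 1)]. reflexivity.
  - eapply recursive_ext with (f := fun zs => S (S (nth 1 zs 0))); [|solve_recursive].
    intros [|k [|x xs]] _; reflexivity.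
  - eapply recursive_ext with (f := fun zs => S (nth (S i) zs 0)); [|solve_recursive].
    intros [|k xs] L; simpl in L; [discriminate|reflexivity].
  - now apply recursive_eval_code_comp.
  - now apply recursive_eval_code_rec.
  - now apply recursive_eval_code_mu.
Qed.

(** * Sequence codes and finite sets *)

Definition code_tl (c : nat) : nat := csnd (pred c).
Definition code_hd (c : nat) : nat := cfst (pred c).
Definition code_drop (i c : nat) : nat := nat_rect (fun _ => nat) c (fun _ r => code_tl r) i.
Definition code_len (c : nat) : nat := bmin (fun n => code_drop n c =? 0) (S c).
Definition code_nth (c i : nat) : nat := code_hd (code_drop i c).

Definition decode_elem (e : nat) : option nat := match e with 0 => None | S n => Some n end.
Definition decode_seq (c : nat) : list (option nat) :=
  map (fun i => decode_elem (code_nth c i)) (seq 0 (code_len c)).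

Lemma recursive1_code_tl : recursive1 code_tl.
Proof. unfold recursive1, code_tl. solve_recursive. Qed.

Lemma recursive1_code_hd : recursive1 code_hd.
Proof. unfold recursive1, code_hd. solve_recursive. Qed.
#[export] Hint Resolve recursive1_code_tl recursive1_code_hd : recursive.

Lemma recursive2_code_drop : recursive2 code_drop.
Proof.
  apply (recursive_rec 2 (fun xs => nth 0 xs 0) (fun xs => nth 1 xs 0)
           (fun zs => code_tl (nth 1 zs 0))); solve_recursive.
Qed.
#[export] Hint Resolve recursive2_code_drop : recursive.

Lemma recursive1_code_len : recursive1 code_len.
Proof.
  apply (recursive_bmin 1 (fun xs => S (nth 0 xs 0))
           (fun zs => code_drop (nth 0 zs 0) (nth 1 zs 0) =? 0)); solve_recursive.
Qed.

Lemma recursive2_code_nth : recursive2 code_nth.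
Proof. unfold recursive2, code_nth. solve_recursive. Qed.
#[export] Hint Resolve recursive1_code_len recursive2_code_nth : recursive.

Lemma decode_elem_code a : decode_elem (code_elem a) = a.
Proof. now destruct a. Qed.

Lemma code_elem_inj a b : code_elem a = code_elem b -> a = b.
Proof. intros H. now rewrite <- (decode_elem_code a), <- (decode_elem_code b), H. Qed.

Lemma code_tl_cons a s : code_tl (code_seq (a :: s)) = code_seq s.
Proof. apply csnd_cpair. Qed.

Lemma code_hd_cons a s : code_hd (code_seq (a :: s)) = code_elem a.
Proof. apply cfst_cpair. Qed.

Lemma code_drop_code_seq s i : code_drop i (code_seq s) = code_seq (skipn i s).
Proof.
  induction i as [|i IH]; [reflexivity|]. unfold code_drop in *. simpl. rewrite IH.
  clear IH. revert s; induction i as [|i IH]; intros [|a s]; try reflexivity.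
  - apply code_tl_cons.
  - apply IH.
Qed.

Lemma length_le_code_seq s : length s <= code_seq s.
Proof.
  induction s as [|a s IH]; simpl; [lia|].
  pose proof (cpair_ge_snd (code_elem a) (code_seq s)). lia.
Qed.

Lemma code_len_code_seq s : code_len (code_seq s) = length s.
Proof.
  unfold code_len. pose proof (length_le_code_seq s). apply bmin_eq; [lia| |].
  - rewrite code_drop_code_seq, skipn_all2 by lia. reflexivity.
  - intros j Hj. rewrite code_drop_code_seq.
    destruct (skipn j s) eqn:E; [|reflexivity].
    apply (f_equal (@length _)) in E. rewrite length_skipn in E. simpl in E. lia.
Qed.

Lemma code_nth_code_seq s i : i < length s -> code_nth (code_seq s) i = code_elem (nth i s None).
Proof.
  intros H. unfold code_nth. rewrite code_drop_code_seq.
  revert s H; induction i as [|i IH]; intros [|a s] H; simpl in *; try lia.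
  - apply code_hd_cons.
  - apply IH. lia.
Qed.

Lemma decode_seq_code_seq s : decode_seq (code_seq s) = s.
Proof.
  unfold decode_seq. rewrite code_len_code_seq.
  apply (nth_ext _ _ None None); rewrite ?length_map, ?length_seq; [reflexivity|].
  intros i Hi. rewrite (nth_indep _ None (decode_elem (code_nth (code_seq s) 0)))
    by now rewrite length_map, length_seq.
  rewrite (map_nth (fun j => decode_elem (code_nth (code_seq s) j)) (seq 0 (length s)) 0 i).
  rewrite seq_nth by exact Hi. simpl.
  now rewrite code_nth_code_seq, decode_elem_code.
Qed.

Lemma code_seq_surj c : exists s, code_seq s = c.
Proof.
  induction c as [c IH] using (well_founded_induction lt_wf).
  destruct c as [|c]; [now exists []|].
  assert (Hlt : code_tl (S c) < S c).
  { unfold code_tl. simpl. pose proof (cpair_cfst_csnd c).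
    pose proof (cpair_ge_snd (cfst c) (csnd c)). lia. }
  destruct (IH _ Hlt) as [s Hs].
  exists (decode_elem (code_hd (S c)) :: s). simpl. rewrite Hs.
  replace (code_elem (decode_elem (code_hd (S c)))) with (code_hd (S c))
    by now destruct (code_hd (S c)).
  unfold code_hd, code_tl. simpl. now rewrite cpair_cfst_csnd.
Qed.

Lemma code_seq_decode_seq c : code_seq (decode_seq c) = c.
Proof. destruct (code_seq_surj c) as [s <-]. now rewrite decode_seq_code_seq. Qed.

Definition bitset (l : list nat) : nat := fold_right (fun x c => 2 ^ x + c) 0 l.

Lemma testbit_bitset l : NoDup l -> forall v, Nat.testbit (bitset l) v = true <-> In v l.
Proof.
  induction 1 as [|x l Hx Hl IH]; intros v; simpl.
  - rewrite Nat.bits_0. split; [discriminate|tauto].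
  - assert (Hdisj : Nat.land (2 ^ x) (bitset l) = 0).
    { apply Nat.bits_inj_0. intros n. rewrite Nat.land_spec, Nat.pow2_bits_eqb.
      destruct (Nat.eqb_spec x n) as [<-|]; [|reflexivity].
      destruct (Nat.testbit (bitset l) x) eqn:F; [|reflexivity].
      exfalso. apply Hx, IH, F. }
    rewrite (Nat.add_nocarry_lxor _ _ Hdisj), Nat.lxor_spec, Nat.pow2_bits_eqb.
    destruct (Nat.eqb_spec x v) as [<-|Hne].
    + destruct (Nat.testbit (bitset l) x) eqn:F; [exfalso; apply Hx, IH, F|]. simpl. tauto.
    + simpl. rewrite IH. intuition.
Qed.

Lemma bitset_ext l l' : NoDup l -> NoDup l' -> (forall v, In v l <-> In v l') ->
  bitset l = bitset l'.
Proof.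
  intros Hl Hl' H. apply Nat.bits_inj. intros v. apply eq_true_iff_eq.
  rewrite !testbit_bitset by assumption. apply H.
Qed.

Lemma in_somes x s : In x (somes s) <-> In (Some x) s.
Proof.
  induction s as [|[a|] s IH]; simpl; [tauto| |].
  - rewrite IH. split; intros [H|H]; auto; left; congruence.
  - rewrite IH. split; auto. intros [H|H]; [discriminate|auto].
Qed.

Lemma testbit_canon_content T i x :
  Nat.testbit (canon_content T i) x = true <-> exists j, j < i /\ T j = Some x.
Proof.
  unfold canon_content. fold (bitset (nodup Nat.eq_dec (somes (initseg T i)))).
  rewrite testbit_bitset by apply NoDup_nodup.
  rewrite nodup_In, in_somes. unfold initseg. rewrite in_map_iff.
  split; intros [j [H1 H2]]; exists j; rewrite in_seq in *; split; (lia || auto).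
Qed.

Definition code_mem (c v : nat) : bool :=
  existsb (fun i => code_nth c i =? S v) (seq 0 (code_len c)).

(* The bound [c] suffices: every element of a sequence is below its code. *)
Definition code_canon (c : nat) : nat :=
  nat_rect (fun _ => nat) 0 (fun v r => r + if code_mem c v then 2 ^ v else 0) c.

Definition code_to_psd (c : nat) : nat := cpair (code_canon c) (code_len c).

Definition code_sub (D c : nat) : bool :=
  forallb (fun i => (code_nth c i =? 0) || Nat.testbit D (pred (code_nth c i)))
    (seq 0 (code_len c)).

Definition code_prefix (c c' : nat) : bool :=
  (code_len c <=? code_len c') &&
  forallb (fun i => code_nth c i =? code_nth c' i) (seq 0 (code_len c)).

Lemma recursive_pred2_code_mem : recursive_pred2 code_mem.
Proof.
  apply (recursive_existsb 2 (fun xs => code_len (nth 0 xs 0))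
           (fun zs => code_nth (nth 1 zs 0) (nth 0 zs 0) =? S (nth 2 zs 0))); solve_recursive.
Qed.
#[export] Hint Resolve recursive_pred2_code_mem : recursive.

Lemma recursive1_code_to_psd : recursive1 code_to_psd.
Proof.
  assert (recursive1 code_canon).
  { apply (recursive_rec 1 (fun xs => nth 0 xs 0) (fun _ => 0) (fun zs => nth 1 zs 0 +
             if code_mem (nth 2 zs 0) (nth 0 zs 0) then 2 ^ nth 0 zs 0 else 0)); solve_recursive. }
  unfold recursive1, code_to_psd. solve_recursive.
Qed.

Lemma recursive_pred2_code_sub : recursive_pred2 code_sub.
Proof.
  apply (recursive_forallb 2 (fun xs => code_len (nth 1 xs 0)) (fun zs =>
           (code_nth (nth 2 zs 0) (nth 0 zs 0) =? 0) ||
           Nat.testbit (nth 1 zs 0) (pred (code_nth (nth 2 zs 0) (nth 0 zs 0)))));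
    solve_recursive.
Qed.

Lemma recursive_pred2_code_prefix : recursive_pred2 code_prefix.
Proof.
  unfold recursive_pred2, code_prefix. apply recursive_andb; [solve_recursive|].
  apply (recursive_forallb 2 (fun xs => code_len (nth 0 xs 0)) (fun zs =>
           code_nth (nth 1 zs 0) (nth 0 zs 0) =? code_nth (nth 2 zs 0) (nth 0 zs 0)));
    solve_recursive.
Qed.
#[export] Hint Resolve recursive_pred2_code_sub recursive_pred2_code_prefix : recursive.

Lemma code_nth_Some s i x :
  i < length s -> code_nth (code_seq s) i = S x <-> nth i s None = Some x.
Proof.
  intros Hi. rewrite code_nth_code_seq by exact Hi.
  split; [apply (code_elem_inj _ (Some x))|now intros ->].
Qed.

Lemma In_Some_nth (s : list (option nat)) x :
  In (Some x) s <-> exists i, i < length s /\ nth i s None = Some x.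
Proof.
  split; [apply In_nth|]. intros [i [Hi <-]]. now apply nth_In.
Qed.

Lemma code_mem_code_seq s v : code_mem (code_seq s) v = true <-> In (Some v) s.
Proof.
  unfold code_mem. rewrite existsb_exists, code_len_code_seq, In_Some_nth.
  split; intros [i [Hi H]]; exists i; cbv beta in *; rewrite in_seq, ?Nat.eqb_eq in *;
    (split; [lia|]); now apply code_nth_Some.
Qed.

Lemma In_Some_lt_code_seq s v : In (Some v) s -> v < code_seq s.
Proof.
  induction s as [|a s IH]; simpl; [tauto|]. intros [->|H].
  - pose proof (cpair_ge_fst (S v) (code_seq s)). simpl in *. lia.
  - pose proof (IH H). pose proof (cpair_ge_snd (code_elem a) (code_seq s)). lia.
Qed.

Lemma bitset_app l l' : bitset (l ++ l') = bitset l + bitset l'.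
Proof. induction l as [|x l IH]; simpl; [reflexivity|]. rewrite IH. lia. Qed.

Lemma code_canon_code_seq s : code_canon (code_seq s) = bitset (nodup Nat.eq_dec (somes s)).
Proof.
  assert (Hfilter : forall B c, nat_rect (fun _ => nat) 0
            (fun v r => r + if code_mem c v then 2 ^ v else 0) B =
          bitset (filter (code_mem c) (seq 0 B))).
  { intros B c. induction B as [|B IH]; [reflexivity|].
    rewrite seq_S, filter_app, bitset_app. simpl. rewrite IH.
    destruct (code_mem c B); simpl; lia. }
  unfold code_canon. rewrite Hfilter. apply bitset_ext.
  - apply NoDup_filter, seq_NoDup.
  - apply NoDup_nodup.
  - intros v. rewrite filter_In, in_seq, nodup_In, in_somes, code_mem_code_seq.
    split; [tauto|]. intros H. pose proof (In_Some_lt_code_seq s v H). split; [lia|exact H].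
Qed.

Lemma code_to_psd_initseg T i : code_to_psd (code_seq (initseg T i)) = cpair (canon_content T i) i.
Proof.
  unfold code_to_psd. rewrite code_canon_code_seq, code_len_code_seq.
  unfold initseg. now rewrite length_map, length_seq.
Qed.

Lemma code_sub_code_seq D s :
  code_sub D (code_seq s) = true <-> forall x, In (Some x) s -> Nat.testbit D x = true.
Proof.
  unfold code_sub. rewrite forallb_forall, code_len_code_seq. split.
  - intros H x Hx. apply In_Some_nth in Hx as [i [Hi Hx]].
    specialize (H i ltac:(apply in_seq; lia)).
    rewrite code_nth_code_seq, Hx in H by exact Hi. exact H.
  - intros H i Hi. apply in_seq in Hi. rewrite code_nth_code_seq by lia.
    destruct (nth i s None) as [x|] eqn:E; [|reflexivity].
    apply H. apply In_Some_nth. exists i. split; [lia|exact E].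
Qed.

Lemma code_prefix_code_seq s s' :
  code_prefix (code_seq s) (code_seq s') = true <-> exists r, s' = s ++ r.
Proof.
  unfold code_prefix. rewrite andb_true_iff, forallb_forall, !code_len_code_seq, Nat.leb_le.
  split.
  - intros [Hlen H]. exists (skipn (length s) s').
    rewrite <- (firstn_skipn (length s) s') at 1. f_equal.
    apply (nth_ext _ _ None None); [rewrite length_firstn; lia|].
    intros i Hi. rewrite length_firstn in Hi. rewrite nth_firstn.
    replace (i <? length s) with true by (symmetry; apply Nat.ltb_lt; lia).
    specialize (H i ltac:(apply in_seq; lia)). apply Nat.eqb_eq in H.
    rewrite !code_nth_code_seq in H by lia. now apply code_elem_inj.
  - intros [r ->]. rewrite length_app. split; [lia|].
    intros i Hi. apply in_seq in Hi. apply Nat.eqb_eq.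
    rewrite !code_nth_code_seq by (rewrite ?length_app; lia). now rewrite app_nth1 by lia.
Qed.

(** * Texts and locking sequences *)

Definition prepend (s : list (option nat)) (T : text) : text :=
  fun n => if n <? length s then nth n s None else T (n - length s).

Definition from_content (T : text) (s : list (option nat)) : Prop :=
  forall x, In (Some x) s -> content T x.

Lemma length_initseg T i : length (initseg T i) = i.
Proof. unfold initseg. now rewrite length_map, length_seq. Qed.

Lemma initseg_S T i : initseg T (S i) = initseg T i ++ [T i].
Proof. unfold initseg. now rewrite seq_S, map_app. Qed.

Lemma initseg_prepend s T n : initseg (prepend s T) (length s + n) = s ++ initseg T n.
Proof.
  induction n as [|n IH].
  - rewrite Nat.add_0_r, app_nil_r.
    apply (nth_ext _ _ None None); [apply length_initseg|].
    intros i Hi. rewrite length_initseg in Hi. unfold initseg.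
    rewrite (nth_indep _ None (prepend s T 0)) by now rewrite length_map, length_seq.
    rewrite map_nth, seq_nth by exact Hi. unfold prepend.
    now replace (0 + i <? length s) with true by (symmetry; apply Nat.ltb_lt; lia).
  - rewrite Nat.add_succ_r, !initseg_S, IH, app_assoc. do 3 f_equal. unfold prepend.
    replace (length s + n <? length s) with false by (symmetry; apply Nat.ltb_ge; lia).
    f_equal. lia.
Qed.

Lemma content_prepend s T x : content (prepend s T) x <-> In (Some x) s \/ content T x.
Proof.
  unfold content, prepend. split.
  - intros [n Hn]. destruct (Nat.ltb_spec n (length s)).
    + left. rewrite <- Hn. now apply nth_In.
    + right. eauto.
  - intros [H|[n Hn]].
    + destruct (In_nth _ _ None H) as [i [Hi Ei]]. exists i.
      now replace (i <? length s) with true by (symmetry; now apply Nat.ltb_lt).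
    + exists (length s + n).
      replace (length s + n <? length s) with false by (symmetry; apply Nat.ltb_ge; lia).
      now replace (length s + n - length s) with n by lia.
Qed.

Lemma Gbeta_prepend h s T : Gbeta h (prepend s T) (length s) = h (code_seq s).
Proof.
  unfold Gbeta. pose proof (initseg_prepend s T 0) as E.
  rewrite Nat.add_0_r, app_nil_r in E. now rewrite E.
Qed.

Lemma from_content_app T s s' : from_content T (s ++ s') <-> from_content T s /\ from_content T s'.
Proof.
  unfold from_content. split.
  - intros H. split; intros x Hx; apply H, in_app_iff; auto.
  - intros [H H'] x Hx. apply in_app_iff in Hx as [Hx|Hx]; auto.
Qed.

Lemma from_content_initseg T n : from_content T (initseg T n).
Proof.
  intros x Hx. unfold initseg in Hx. apply in_map_iff in Hx as [j [Hj _]]. now exists j.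
Qed.

Lemma set_eq_content_prepend s T L :
  from_content T s -> set_eq (content T) L -> set_eq (content (prepend s T)) L.
Proof.
  intros Hs HT x. rewrite content_prepend, <- (HT x). split; [intros [H|H]|]; auto.
Qed.

Section BuildText.

Variable f : list (option nat) -> list (option nat).
Variable T : text.

Fixpoint build (n : nat) : list (option nat) :=
  match n with
  | 0 => []
  | S n => (build n ++ [T n]) ++ f (build n ++ [T n])
  end.

Definition build_text : text := fun n => nth n (build (S n)) None.

Lemma build_length n : n <= length (build n).
Proof. induction n as [|n IH]; simpl; [lia|]. rewrite !length_app. simpl. lia. Qed.

Lemma build_prefix i j : i <= j -> exists r, build j = build i ++ r.
Proof.
  induction 1 as [|j _ [r Hr]]; [exists []; now rewrite app_nil_r|].
  simpl. rewrite Hr. exists ((r ++ [T j]) ++ f ((build i ++ r) ++ [T j])).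
  now rewrite !app_assoc.
Qed.

Lemma build_nth i j n : n < length (build i) -> n < length (build j) ->
  nth n (build i) None = nth n (build j) None.
Proof.
  intros Hi Hj. destruct (Nat.le_ge_cases i j) as [H|H].
  - destruct (build_prefix i j H) as [r ->]. now rewrite app_nth1.
  - destruct (build_prefix j i H) as [r ->]. now rewrite app_nth1.
Qed.

Lemma initseg_build_text i m : m <= length (build i) ->
  initseg build_text m = firstn m (build i).
Proof.
  intros Hm. apply (nth_ext _ _ None None); [rewrite length_initseg, length_firstn; lia|].
  intros n Hn. rewrite length_initseg in Hn. unfold initseg.
  rewrite (nth_indep _ None (build_text 0)) by now rewrite length_map, length_seq.
  rewrite map_nth, seq_nth, nth_firstn by exact Hn.
  replace (n <? m) with true by (symmetry; now apply Nat.ltb_lt).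
  unfold build_text. rewrite Nat.add_0_l. apply build_nth; [pose proof (build_length (S n))|]; lia.
Qed.

Lemma build_from_content : (forall s, from_content T s -> from_content T (f s)) ->
  forall n, from_content T (build n).
Proof.
  intros Hf. induction n as [|n IH]; simpl; [intros x []|].
  assert (Hn : from_content T (build n ++ [T n])).
  { apply from_content_app. split; [exact IH|]. intros x [Hx|[]]. now exists n. }
  apply from_content_app. split; [exact Hn|]. now apply Hf.
Qed.

Lemma content_build_text : (forall s, from_content T s -> from_content T (f s)) ->
  forall x, content build_text x <-> content T x.
Proof.
  intros Hf x. split.
  - intros [n Hn]. apply (build_from_content Hf (S n)). rewrite <- Hn. apply nth_In.
    pose proof (build_length (S n)). lia.
  - intros [n Hn]. exists (length (build n)). unfold build_text.
    rewrite (build_nth _ (S n)).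
    + simpl. rewrite <- app_assoc, app_nth2, Nat.sub_diag by lia. exact Hn.
    + pose proof (build_length (S (length (build n)))). lia.
    + simpl. rewrite !length_app. simpl. lia.
Qed.

End BuildText.

Section GLearner.

Variables (phi : nat -> pfun) (h : pfun) (L : nat -> Prop).
Hypothesis HL : learns phi Gbeta h L.
Variable T : text.
Hypothesis HT : set_eq (content T) L.

Lemma learner_defined s : from_content T s -> exists y, h (code_seq s) = Some y.
Proof.
  intros Hs. destruct (HL (prepend s T) (set_eq_content_prepend s T L Hs HT)) as [p [Hp _]].
  exists (p (length s)). rewrite <- (Gbeta_prepend h s T). apply Hp.
Qed.

Lemma learner_cautious s y : from_content T s -> h (code_seq s) = Some y ->
  ~ ((forall x, content T x -> W phi y x) /\ exists x, W phi y x /\ ~ content T x).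
Proof.
  intros Hs Hy [Hsup [x [Hx Hnx]]].
  destruct (HL (prepend s T) (set_eq_content_prepend s T L Hs HT)) as [p [Hp [Hcaut _]]].
  assert (Hps : p (length s) = y).
  { specialize (Hp (length s)). rewrite Gbeta_prepend, Hy in Hp. congruence. }
  apply Hcaut. exists (length s). rewrite Hps. split.
  - intros z Hz. apply content_prepend in Hz as [Hz|Hz]; auto.
  - exists x. split; [exact Hx|]. intros Hz. apply content_prepend in Hz as [Hz|Hz]; auto.
Qed.

Definition locking (s : list (option nat)) : Prop :=
  from_content T s /\ forall r, from_content T r -> h (code_seq (s ++ r)) = h (code_seq s).

(* Blum and Blum: if no sequence locks [h], appending mind-changing extensions
   builds a text for [L] on which [h] does not converge. *)
Lemma locking_exists : exists s, locking s.
Proof.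
  apply NNPP; intros Hno.
  assert (Hstep : forall s, exists r, from_content T s ->
            from_content T r /\ h (code_seq (s ++ r)) <> h (code_seq s)).
  { intros s. destruct (classic (from_content T s)) as [Hs|Hs]; [|exists []; tauto].
    apply NNPP; intros Hn. apply Hno. exists s. split; [exact Hs|]. intros r Hr.
    apply NNPP; intros Hne. apply Hn. now exists r. }
  set (f := fun s => proj1_sig (constructive_indefinite_description _ (Hstep s))).
  assert (Hf : forall s, from_content T s ->
            from_content T (f s) /\ h (code_seq (s ++ f s)) <> h (code_seq s)).
  { intros s. unfold f. now destruct (constructive_indefinite_description _ (Hstep s)). }
  assert (HB : set_eq (content (build_text f T)) L).
  { intros x. rewrite content_build_text by (intros s Hs; now apply Hf). apply HT. }
  destruct (HL _ HB) as [p [Hp [_ [n0 Hn0]]]].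
  assert (Hout : forall m, m <= length (build f T (S n0)) ->
            h (code_seq (firstn m (build f T (S n0)))) = Some (p m)).
  { intros m Hm. rewrite <- (initseg_build_text f T (S n0) m Hm). apply Hp. }
  set (s := build f T n0 ++ [T n0]).
  assert (Hs : from_content T s).
  { apply from_content_app. split; [apply build_from_content; intros r Hr; now apply Hf|].
    intros x [Hx|[]]. now exists n0. }
  assert (Hlen : n0 <= length s)
    by (pose proof (build_length f T n0); unfold s; rewrite length_app; lia).
  assert (Hbuild : build f T (S n0) = s ++ f s) by reflexivity.
  pose proof (Hout (length s)) as E1. pose proof (Hout (length (s ++ f s))) as E2.
  rewrite Hbuild, firstn_app, Nat.sub_diag, firstn_all, app_nil_r in E1.
  rewrite Hbuild, firstn_all in E2.
  apply (proj2 (Hf s Hs)). rewrite E1, E2 by (rewrite ?length_app; lia).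
  destruct (Hn0 (length s) Hlen) as [-> _].
  destruct (Hn0 (length (s ++ f s)) ltac:(rewrite length_app; lia)) as [-> _].
  reflexivity.
Qed.

Lemma locking_correct s y : locking s -> h (code_seq s) = Some y ->
  set_eq (W phi y) (content T).
Proof.
  intros [Hs Hlock] Hy.
  pose proof (set_eq_content_prepend s T L Hs HT) as HsT.
  destruct (HL _ HsT) as [p [Hp [_ [n1 Hn1]]]].
  set (m := length s + n1).
  assert (Hpm : p m = y).
  { specialize (Hp m). unfold Gbeta, m in *.
    rewrite initseg_prepend, Hlock, Hy in Hp by apply from_content_initseg. congruence. }
  destruct (Hn1 m ltac:(unfold m; lia)) as [Hstable Hcorrect]. rewrite <- Hstable, Hpm in Hcorrect.
  intros x. rewrite (Hcorrect x), (HsT x), (HT x). reflexivity.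
Qed.

End GLearner.

(** * The two translations *)

Lemma recursive1_total_computable F : recursive1 F -> total_computable (fun x => Some (F x)).
Proof.
  intros [t Ht]. split; [|intros x; discriminate].
  exists t. intros x y. split.
  - intros [= <-]. now apply (Ht [x]).
  - intros Hy. f_equal. apply (evalp_functional t [x]); [now apply (Ht [x])|exact Hy].
Qed.

Lemma R_monoid_comp_recursive1 I h F : R_monoid I -> I h -> recursive1 F ->
  I (fun x => h (F x)).
Proof.
  intros (_ & _ & Hcomp & HR) Hh HF.
  apply (Hcomp h (fun x => Some (F x)) Hh), HR, recursive1_total_computable, HF.
Qed.

Lemma Psd_to_G (phi : nat -> pfun) (I : pfun -> Prop) (HI : R_monoid I)
    (S : (nat -> Prop) -> Prop) (LL : (nat -> Prop) -> Prop) :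
  (exists h, I h /\ (forall L, LL L -> learns phi Psdbeta h L) /\ defined_on Psdbeta h S) ->
  (exists h, I h /\ (forall L, LL L -> learns phi Gbeta h L) /\ defined_on Gbeta h S).
Proof.
  intros [h (Hh & Hlearn & Hdef)].
  exists (fun x => h (code_to_psd x)).
  split; [exact (R_monoid_comp_recursive1 I h _ HI Hh recursive1_code_to_psd)|].
  assert (E : forall T n, Gbeta (fun x => h (code_to_psd x)) T n = Psdbeta h T n)
    by (intros T n; unfold Gbeta; now rewrite code_to_psd_initseg).
  unfold learns, defined_on in *. setoid_rewrite E. auto.
Qed.

Definition run (th : prf) (k c : nat) : nat := eval_code th [k; c].

Lemma recursive2_run th : recursive2 (run th).
Proof.
  eapply recursive_ext; [|exact (recursive_eval_code th 1)].
  intros [|k [|c [|]]] L; simpl in L; try discriminate. reflexivity.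
Qed.
#[export] Hint Resolve recursive2_run : recursive.

(* [c] is accepted at stage [t] for the finite set [D] if it codes a sequence
   drawn from [D] on which [th] halts within [t] steps, and no extension
   [c' <= t] drawn from [D] on which [th] halts within [t] steps changes the
   output: a finite approximation of being a locking sequence. *)
Definition accept (th : prf) (D t c : nat) : bool :=
  code_sub D c && (0 <? run th t c) &&
  forallb (fun c' => implb (code_prefix c c' && code_sub D c' && (0 <? run th t c'))
                           (run th t c' =? run th t c))
    (seq 0 (S t)).

Definition psd_candidate (th : prf) (x : nat) : nat :=
  bmin (accept th (cfst x) (csnd x)) (S (csnd x)).

(* Defaults to 0, the code of the empty sequence. *)
Definition psd_to_code (th : prf) (x : nat) : nat :=
  if psd_candidate th x <? S (csnd x) then psd_candidate th x else 0.

Lemma recursive_pred3_accept th : recursive_pred3 (accept th).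
Proof.
  unfold recursive_pred3, accept. apply recursive_andb; [solve_recursive|].
  apply (recursive_forallb 3 (fun xs => S (nth 1 xs 0)) (fun zs =>
    implb (code_prefix (nth 3 zs 0) (nth 0 zs 0) && code_sub (nth 1 zs 0) (nth 0 zs 0) &&
           (0 <? run th (nth 2 zs 0) (nth 0 zs 0)))
          (run th (nth 2 zs 0) (nth 0 zs 0) =? run th (nth 2 zs 0) (nth 3 zs 0))));
    solve_recursive.
Qed.
#[export] Hint Resolve recursive_pred3_accept : recursive.

Lemma recursive1_psd_to_code th : recursive1 (psd_to_code th).
Proof.
  assert (recursive1 (psd_candidate th)).
  { apply (recursive_bmin 1 (fun xs => S (csnd (nth 0 xs 0))) (fun zs =>
             accept th (cfst (nth 1 zs 0)) (csnd (nth 1 zs 0)) (nth 0 zs 0))); solve_recursive. }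
  unfold recursive1, psd_to_code. solve_recursive.
Qed.

Lemma accept_spec th D t c : accept th D t c = true <->
  code_sub D c = true /\ 0 < run th t c /\
  forall c', c' <= t -> code_prefix c c' = true -> code_sub D c' = true ->
    0 < run th t c' -> run th t c' = run th t c.
Proof.
  unfold accept. rewrite !andb_true_iff, Nat.ltb_lt, forallb_forall.
  split.
  - intros [[Hsub Hrun] Hall]. do 2 (split; [assumption|]). intros c' Hc' Hpre Hsub' Hrun'.
    specialize (Hall c' ltac:(apply in_seq; lia)).
    apply Nat.ltb_lt in Hrun'. rewrite Hpre, Hsub', Hrun' in Hall.
    now apply Nat.eqb_eq.
  - intros (Hsub & Hrun & Hall). split; [split; assumption|].
    intros c' Hc'. apply in_seq in Hc'. apply implb_true_iff.
    rewrite !andb_true_iff, Nat.ltb_lt, Nat.eqb_eq. intros [[Hpre Hsub'] Hrun'].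
    apply Hall; auto; lia.
Qed.

Lemma code_sub_canon_from_content T N c :
  code_sub (canon_content T N) c = true -> from_content T (decode_seq c).
Proof.
  rewrite <- (code_seq_decode_seq c) at 1. rewrite code_sub_code_seq.
  intros H x Hx. destruct (proj1 (testbit_canon_content T N x) (H x Hx)) as [j [_ Hj]].
  now exists j.
Qed.

Lemma code_sub_canon_eventually T s : from_content T s ->
  exists N0, forall N, N0 <= N -> code_sub (canon_content T N) (code_seq s) = true.
Proof.
  induction s as [|a s IH]; intros Hs.
  { exists 0. intros N _. now apply code_sub_code_seq. }
  destruct IH as [N1 HN1]; [intros x Hx; apply Hs; now right|].
  assert (Ha : exists N2, forall x, a = Some x -> exists j, j < N2 /\ T j = Some x).
  { destruct a as [x|]; [|now exists 0].
    destruct (Hs x (or_introl eq_refl)) as [j Hj].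
    exists (S j). intros x' [= <-]. exists j. split; [lia|exact Hj]. }
  destruct Ha as [N2 HN2]. exists (max N1 N2). intros N HN.
  apply code_sub_code_seq. intros x [->|Hx].
  - apply testbit_canon_content.
    destruct (HN2 x eq_refl) as [j [Hj Hjx]]. exists j. split; [lia|exact Hjx].
  - exact (proj1 (code_sub_code_seq _ s) (HN1 N ltac:(lia)) x Hx).
Qed.

Lemma psd_to_code_from_content th T n :
  from_content T (decode_seq (psd_to_code th (cpair (canon_content T n) n))).
Proof.
  unfold psd_to_code, psd_candidate. rewrite cfst_cpair, csnd_cpair.
  destruct (Nat.ltb_spec (bmin (accept th (canon_content T n) n) (S n)) (S n)) as [Hlt|_].
  - apply bmin_found, accept_spec in Hlt as [Hsub _].
    exact (code_sub_canon_from_content T n _ Hsub).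
  - intros x Hx. change 0 with (code_seq []) in Hx. now rewrite decode_seq_code_seq in Hx.
Qed.

Lemma eventually_forall_below (Q : nat -> nat -> Prop) c0 :
  (forall c, c < c0 -> exists N0, forall N, N0 <= N -> Q c N) ->
  exists N0, forall N, N0 <= N -> forall c, c < c0 -> Q c N.
Proof.
  induction c0 as [|c0 IH]; intros H; [exists 0; intros; lia|].
  destruct IH as [N1 H1]; [intros c Hc; apply H; lia|].
  destruct (H c0 ltac:(lia)) as [N2 H2]. exists (max N1 N2). intros N HN c Hc.
  destruct (Nat.eq_dec c c0) as [->|]; [apply H2; lia|apply H1; lia].
Qed.

Section PsdSimulation.

Variables (phi : nat -> pfun) (h : pfun) (th : prf).
Hypothesis Hth : forall x y, h x = Some y <-> evalp th [x] y.

Lemma run_Some k c y : run th k c = S y -> h c = Some y.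
Proof.
  unfold run, eval_code. simpl. destruct (eval_fuel k th [c]) as [z|] eqn:E; simpl; [|discriminate].
  intros [= ->]. apply Hth. eapply eval_fuel_sound; eauto.
Qed.

Lemma run_eventually c y : h c = Some y -> exists k0, forall k, k0 <= k -> run th k c = S y.
Proof.
  intros H. apply Hth, eval_fuel_complete in H as [k0 Hk0]. exists k0. intros k Hk.
  unfold run, eval_code. simpl. now rewrite (eval_fuel_mono _ _ k _ _ Hk0 Hk).
Qed.

Variable L : nat -> Prop.
Hypothesis HL : learns phi Gbeta h L.

Section OnText.

Variable T : text.
Hypothesis HT : set_eq (content T) L.

Lemma non_locking_rejected c : ~ locking h T (decode_seq c) ->
  exists N0, forall N, N0 <= N -> accept th (canon_content T N) N c = false.
Proof.
  intros Hnl.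
  destruct (classic (from_content T (decode_seq c))) as [Hc|Hc].
  2:{ exists 0. intros N _. apply not_true_iff_false. intros [Hsub _]%accept_spec.
      exact (Hc (code_sub_canon_from_content T N c Hsub)). }
  assert (Hext : exists r, from_content T r /\ h (code_seq (decode_seq c ++ r)) <> h c).
  { apply NNPP; intros Hn. apply Hnl. split; [exact Hc|]. intros r Hr.
    rewrite code_seq_decode_seq. apply NNPP; intros Hne. apply Hn. eauto. }
  destruct Hext as [r [Hr Hne]].
  set (c' := code_seq (decode_seq c ++ r)) in Hne.
  assert (Hc' : from_content T (decode_seq c ++ r)) by now apply from_content_app.
  destruct (learner_defined phi h L HL T HT _ Hc) as [y Hy].
  rewrite code_seq_decode_seq in Hy.
  destruct (learner_defined phi h L HL T HT _ Hc') as [y' Hy']. fold c' in Hy'.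
  destruct (run_eventually c y Hy) as [k1 Hk1].
  destruct (run_eventually c' y' Hy') as [k2 Hk2].
  destruct (code_sub_canon_eventually T _ Hc') as [k3 Hk3].
  exists (max c' (max k1 (max k2 k3))). intros N HN.
  apply not_true_iff_false. intros (_ & _ & Hacc)%accept_spec.
  apply Hne. rewrite Hy, Hy'. enough (S y' = S y) by congruence.
  rewrite <- (Hk1 N), <- (Hk2 N) by lia. apply Hacc.
  - lia.
  - rewrite <- (code_seq_decode_seq c) at 1. apply code_prefix_code_seq. eauto.
  - apply Hk3. lia.
  - rewrite Hk2 by lia. lia.
Qed.

Lemma locking_accepted c : locking h T (decode_seq c) ->
  exists N0, forall N, N0 <= N -> accept th (canon_content T N) N c = true.
Proof.
  intros [Hc Hlock].
  destruct (learner_defined phi h L HL T HT _ Hc) as [y Hy].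
  rewrite code_seq_decode_seq in Hy.
  destruct (run_eventually c y Hy) as [k1 Hk1].
  destruct (code_sub_canon_eventually T _ Hc) as [k2 Hk2].
  rewrite code_seq_decode_seq in Hk2.
  exists (max k1 k2). intros N HN. apply accept_spec.
  rewrite (Hk1 N) by lia. split; [apply Hk2; lia|split; [lia|]].
  intros c' _ Hpre Hsub' Hrun'.
  rewrite <- (code_seq_decode_seq c), <- (code_seq_decode_seq c') in Hpre.
  apply code_prefix_code_seq in Hpre as [r Hr].
  apply code_sub_canon_from_content in Hsub'. rewrite Hr in Hsub'.
  apply from_content_app in Hsub' as [_ Hr'].
  destruct (run th N c') as [|z] eqn:Ez; [lia|]. apply run_Some in Ez.
  specialize (Hlock r Hr'). rewrite <- Hr, !code_seq_decode_seq, Ez, Hy in Hlock.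
  congruence.
Qed.

Lemma psd_to_code_converges : exists c0 y0,
  locking h T (decode_seq c0) /\ h c0 = Some y0 /\
  exists N0, forall N, N0 <= N -> psd_to_code th (cpair (canon_content T N) N) = c0.
Proof.
  destruct (dec_inh_nat_subset_has_unique_least_element (fun c => locking h T (decode_seq c)))
    as [c0 [[Hc0 Hleast] _]].
  { intros c. apply classic. }
  { destruct (locking_exists phi h L HL T HT) as [s Hs].
    exists (code_seq s). now rewrite decode_seq_code_seq. }
  destruct (learner_defined phi h L HL T HT _ (proj1 Hc0)) as [y0 Hy0].
  rewrite code_seq_decode_seq in Hy0.
  exists c0, y0. split; [exact Hc0|split; [exact Hy0|]].
  destruct (eventually_forall_below (fun c N => accept th (canon_content T N) N c = false) c0)
    as [N1 HN1].
  { intros c Hc. apply non_locking_rejected. intros Hl. specialize (Hleast c Hl). lia. }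
  destruct (locking_accepted c0 Hc0) as [N2 HN2].
  exists (max c0 (max N1 N2)). intros N HN.
  assert (Hcand : psd_candidate th (cpair (canon_content T N) N) = c0).
  { unfold psd_candidate. rewrite cfst_cpair, csnd_cpair.
    apply bmin_eq; [lia|apply HN2; lia|]. intros j Hj. apply HN1; [lia|exact Hj]. }
  unfold psd_to_code. rewrite Hcand, csnd_cpair.
  now replace (c0 <? S N) with true by (symmetry; apply Nat.ltb_lt; lia).
Qed.

Lemma psd_learner_on_text : exists p : nat -> nat,
  (forall n, Psdbeta (fun x => h (psd_to_code th x)) T n = Some (p n)) /\
  CautTar phi p T /\ Ex phi p T.
Proof.
  set (out := fun n => psd_to_code th (cpair (canon_content T n) n)).
  assert (Hout : forall n, from_content T (decode_seq (out n)))
    by (intros n; apply psd_to_code_from_content).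
  set (p := fun n => match h (out n) with Some y => y | None => 0 end).
  assert (Hp : forall n, h (out n) = Some (p n)).
  { intros n. destruct (learner_defined phi h L HL T HT _ (Hout n)) as [y Hy].
    rewrite code_seq_decode_seq in Hy. unfold p. now rewrite Hy. }
  exists p. split; [exact Hp|split].
  - intros [n Hn]. apply (learner_cautious phi h L HL T HT (decode_seq (out n)) (p n));
      [exact (Hout n)|now rewrite code_seq_decode_seq|exact Hn].
  - destruct psd_to_code_converges as (c0 & y0 & Hc0 & Hy0 & N0 & HN0).
    assert (Hstable : forall N, N0 <= N -> p N = y0).
    { intros N HN. pose proof (Hp N) as E. unfold out in E. rewrite HN0, Hy0 in E by exact HN.
      congruence. }
    exists N0. intros n Hn. rewrite (Hstable n Hn), (Hstable N0 (le_n _)). split; [reflexivity|].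
    apply (locking_correct phi h L HL T HT (decode_seq c0)); [exact Hc0|].
    now rewrite code_seq_decode_seq.
Qed.

End OnText.

Lemma psd_learner_learns : learns phi Psdbeta (fun x => h (psd_to_code th x)) L.
Proof. intros T HT. exact (psd_learner_on_text T HT). Qed.

End PsdSimulation.

Lemma G_defined_from_content h S T s :
  closed_under_subsets S -> defined_on Gbeta h S -> TxtS S T -> from_content T s ->
  h (code_seq s) <> None.
Proof.
  intros HS Hdef HTS Hs. rewrite <- (Gbeta_prepend h s T). apply Hdef.
  apply (HS (content T)); [|exact HTS].
  intros x Hx. apply content_prepend in Hx as [Hx|Hx]; auto.
Qed.

Lemma G_to_Psd (phi : nat -> pfun) (I : pfun -> Prop) (HI : R_monoid I)
    (S : (nat -> Prop) -> Prop) (HS : closed_under_subsets S) (LL : (nat -> Prop) -> Prop) :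
  (exists h, I h /\ (forall L, LL L -> learns phi Gbeta h L) /\ defined_on Gbeta h S) ->
  (exists h, I h /\ (forall L, LL L -> learns phi Psdbeta h L) /\ defined_on Psdbeta h S).
Proof.
  intros [h (Hh & Hlearn & Hdef)].
  destruct (proj1 HI h Hh) as [th Hth].
  exists (fun x => h (psd_to_code th x)).
  split; [exact (R_monoid_comp_recursive1 I h _ HI Hh (recursive1_psd_to_code th))|split].
  - intros L HLL. exact (psd_learner_learns phi h th Hth L (Hlearn L HLL)).
  - intros T HTS n. unfold Psdbeta.
    rewrite <- (code_seq_decode_seq (psd_to_code th _)).
    exact (G_defined_from_content h S T _ HS Hdef HTS (psd_to_code_from_content th T n)).
Qed.

Theorem theorem6 (phi : nat -> pfun) (Hphi : acceptable phi)
    (I : pfun -> Prop) (HI : R_monoid I)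
    (S : (nat -> Prop) -> Prop) (HS : closed_under_subsets S)
    (LL : (nat -> Prop) -> Prop) :
  (exists h, I h /\ (forall L, LL L -> learns phi Gbeta h L) /\ defined_on Gbeta h S)
  <->
  (exists h, I h /\ (forall L, LL L -> learns phi Psdbeta h L) /\ defined_on Psdbeta h S).
Proof.
  split; [apply G_to_Psd|apply Psd_to_G]; assumption.
Qed.
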